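(* There exist $0<m_*\le M_*$ and $\alpha_*\in(0,1)$ such that for all $\alpha\in[\alpha_*,1)$ and all $n\ge1$, $$m_*(1-\alpha)\le j_{\nu_\alpha,n}-j_{-\nu_\alpha,n}\le M_*(1-\alpha),$$ where $\nu_\alpha=\frac{1-\alpha}{2-\alpha}$.
   Context: For real $\nu$, $J_\nu$ is the Bessel function of the first kind of order $\nu$ (given by $\sum_{k\ge0}\frac{(-1)^k}{k!\Gamma(k+\nu+1)}(y/2)^{2k+\nu}$) and $j_{\nu,n}$ denotes its $n$-th positive zero. *)

From Stdlib Require Import Reals List Arith.
From Coquelicot Require Import Coquelicot.
Open Scope R_scope.

(* Euler Gamma function, for x > 0:  Gamma x = \int_0^oo t^(x-1) e^(-t) dt
   (improper Riemann integral; only used at positive arguments). *)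
Definition Gamma (x : R) : R :=
  RInt_gen (fun t => Rpower t (x - 1) * exp (- t))
           (at_right 0) (Rbar_locally p_infty).

(* Bessel function of the first kind of real order nu, for y > 0:
   J_nu(y) = sum_{k>=0} (-1)^k / (k! Gamma(k+nu+1)) (y/2)^(2k+nu).
   (Used only for nu > -1, where all Gamma arguments are positive.) *)
Definition BesselJ (nu y : R) : R :=
  Series (fun k : nat =>
    (-1) ^ k / (INR (Factorial.fact k) * Gamma (INR k + nu + 1))
    * Rpower (y / 2) (2 * INR k + nu)).

Definition is_nth_pos_zero (nu : R) (n : nat) (j : R) : Prop :=
  0 < j /\ BesselJ nu j = 0 /\
  exists l : list R, NoDup l /\ length l = (n - 1)%nat /\
    (forall x, In x l <-> (0 < x < j /\ BesselJ nu x = 0)).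

Definition nu_alpha (alpha : R) : R := (1 - alpha) / (2 - alpha).

(* For |mu| <= 1/10 let U mu x = x^(mu+1/2) f_mu(x^2/4), where f_mu is the entire series with
   J_mu(x) = (x/2)^mu / Gamma(mu+1) * f_mu(x^2/4).  Then U mu has the positive zeros of J_mu and
   solves U'' + Q U = 0 with Q = 1 + (1/4 - mu^2)/x^2, which lies in [1, 5/4] on [1, oo).  As Q
   decreases, the energy Q U^2 + U'^2 decreases and Sonin's function U^2 + U'^2/Q increases;
   their values at x = 1, read off the series, bound U and U' by 2 and give |U'| >= 6/10 at
   every zero.  So zeros are at least 1/10 apart and crossed transversally, and comparison
   with sin puts a zero in every interval of length pi.
   For 0 < nu <= 1/200 the Wronskian of U nu and U (-nu) is -2 nu.  At a zero a of U nu it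
   forces |U (-nu) a| >= nu, which keeps the zeros of U (-nu) at distance >= nu/2 from a; at a
   zero b of U (-nu) it forces |U nu b| <= 3 nu, so U nu vanishes within 20 nu after b.  Together
   with the alternating signs of U' at consecutive zeros this interlaces the zeros and puts the
   n-th zero of U (-nu) between nu/2 and 20 nu before the n-th zero of U nu.  Finally
   (1 - alpha)/2 <= nu_alpha alpha <= 1 - alpha. *)

From Stdlib Require Import Reals List Arith Lra Lia.
From Coquelicot Require Import Coquelicot.
From Stdlib Require Classical_Prop ClassicalEpsilon.
Open Scope R_scope.

Lemma is_derive_val_eq (f : R -> R) (x l l' : R) : is_derive f x l -> l = l' -> is_derive f x l'.
Proof. now intros H <-. Qed.

Lemma is_derive_Rmult (f g : R -> R) x df dg : is_derive f x df -> is_derive g x dg ->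
  is_derive (fun y => f y * g y) x (df * g x + f x * dg).
Proof.
  intros Hf Hg. eapply is_derive_val_eq.
  - apply (is_derive_mult f g x df dg Hf Hg); intros; apply Rmult_comm.
  - simpl; unfold plus, mult; simpl; ring.
Qed.

Lemma is_derive_Rplus (f g : R -> R) x df dg : is_derive f x df -> is_derive g x dg ->
  is_derive (fun y => f y + g y) x (df + dg).
Proof. apply (is_derive_plus f g). Qed.

Lemma is_derive_Rminus (f g : R -> R) x df dg : is_derive f x df -> is_derive g x dg ->
  is_derive (fun y => f y - g y) x (df - dg).
Proof. apply (is_derive_minus f g). Qed.

Lemma is_derive_Ropp (f : R -> R) x df : is_derive f x df -> is_derive (fun y => - f y) x (- df).
Proof. apply (is_derive_opp f). Qed.

Lemma is_derive_Rscal c (f : R -> R) x df : is_derive f x df -> is_derive (fun y => c * f y) x (c * df).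
Proof. apply (is_derive_scal f). Qed.

Lemma is_derive_Rcomp (f g : R -> R) x df dg : is_derive g x dg -> is_derive f (g x) df ->
  is_derive (fun y => f (g y)) x (dg * df).
Proof.
  intros Hg Hf. eapply is_derive_val_eq; [apply (is_derive_comp f g x df dg Hf Hg)|].
  simpl; unfold scal; simpl; unfold mult; simpl; ring.
Qed.

Lemma is_derive_Rinv (f : R -> R) x df : is_derive f x df -> f x <> 0 ->
  is_derive (fun y => / f y) x (- df / (f x * f x)).
Proof. intros Hf Hx. eapply is_derive_val_eq; [apply (is_derive_inv f x df Hf Hx)|]. simpl; field; auto. Qed.

Lemma is_derive_Rpower c t : 0 < t -> is_derive (fun t => Rpower t c) t (c * Rpower t (c - 1)).
Proof. intros; apply is_derive_Reals, derivable_pt_lim_power; auto. Qed.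

Lemma is_derive_continuity_pt (f : R -> R) x l : is_derive f x l -> continuity_pt f x.
Proof. intros H. apply continuity_pt_filterlim, (ex_derive_continuous f x). now exists l. Qed.

Lemma MVT_interval (F dF : R -> R) a b : a < b ->
  (forall x, a <= x <= b -> is_derive F x (dF x)) ->
  exists c, a <= c <= b /\ F b - F a = dF c * (b - a).
Proof.
  intros Hab HD. destruct (MVT_cor3 F dF a b Hab) as [c [Hac [Hcb E]]].
  - intros x Hax Hxb. apply is_derive_Reals, HD; lra.
  - exists c; split; [lra | rewrite E; ring].
Qed.

Lemma increment_ge_of_derive_ge (F dF : R -> R) a b c : a <= b ->
  (forall x, a <= x <= b -> is_derive F x (dF x)) ->
  (forall x, a <= x <= b -> c <= dF x) -> c * (b - a) <= F b - F a.
Proof.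
  intros Hab HD Hc. destruct (Req_dec a b) as [<-|Hne]; [lra|].
  destruct (MVT_interval F dF a b ltac:(lra) HD) as [x [Hx ->]].
  apply Rmult_le_compat_r; [lra | auto].
Qed.

Lemma increment_le_of_derive_le (F dF : R -> R) a b c : a <= b ->
  (forall x, a <= x <= b -> is_derive F x (dF x)) ->
  (forall x, a <= x <= b -> dF x <= c) -> F b - F a <= c * (b - a).
Proof.
  intros Hab HD Hc.
  enough (- c * (b - a) <= - F b - - F a) by lra.
  apply (increment_ge_of_derive_ge (fun x => - F x) (fun x => - dF x)); auto.
  - intros; apply is_derive_Ropp; auto.
  - intros x Hx; specialize (Hc x Hx); lra.
Qed.

Lemma derive_0_eq (F : R -> R) a b :
  (forall x, Rmin a b <= x <= Rmax a b -> is_derive F x 0) -> F a = F b.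
Proof.
  intros HD.
  assert (Hle : forall u v, u <= v -> (forall x, u <= x <= v -> is_derive F x 0) -> F u = F v).
  { intros u v Huv Huv'.
    pose proof (increment_ge_of_derive_ge F (fun _ => 0) u v 0 Huv Huv' ltac:(intros; lra)).
    pose proof (increment_le_of_derive_le F (fun _ => 0) u v 0 Huv Huv' ltac:(intros; lra)).
    lra. }
  destruct (Rle_or_lt a b) as [Hab|Hba].
  - apply Hle; auto. intros x Hx; apply HD. rewrite Rmin_left, Rmax_right; lra.
  - symmetry; apply Hle; [lra|]. intros x Hx; apply HD. rewrite Rmin_right, Rmax_left; lra.
Qed.

Lemma IVT_sign_change (f : R -> R) a b : a <= b ->
  (forall t, a <= t <= b -> continuity_pt f t) -> f a * f b < 0 ->
  exists z, a < z < b /\ f z = 0.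
Proof.
  intros Hab Hc Hs.
  assert (Hneg : forall g : R -> R, (forall t, a <= t <= b -> continuity_pt g t) ->
            g a < 0 -> 0 < g b -> exists z, a < z < b /\ g z = 0).
  { intros g Hg Ha Hb. destruct (Req_dec a b) as [<-|Hne]; [lra|].
    destruct (Ranalysis5.IVT_interv g a b) as [z [Hz Ez]]; [intros t Ht; apply Hg; lra | lra | auto | auto |].
    exists z; split; auto. destruct Hz as [Hz1 Hz2].
    split; apply Rnot_le_lt; intro; [replace z with a in Ez by lra|replace z with b in Ez by lra]; lra. }
  destruct (Rlt_or_le (f a) 0) as [Ha|Ha].
  - apply Hneg; auto. nra.
  - assert (Ha0 : f a <> 0) by (intro E; rewrite E in Hs; lra).
    assert (0 < f a /\ f b < 0) as [Ha' Hb'] by (split; [lra | nra]).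
    destruct (Hneg (fun t => - f t)) as [z [Hz Ez]]; try lra.
    + intros t Ht; apply continuity_pt_opp; auto.
    + exists z; split; auto; lra.
Qed.

Lemma ball_of_Rabs (y : R) (eps : posreal) z : Rabs (z - y) < eps -> ball y eps z.
Proof. auto. Qed.

Lemma continuity_pt_nonzero_near (f : R -> R) z : continuity_pt f z -> f z <> 0 ->
  exists d, 0 < d /\ forall t, Rabs (t - z) < d -> f t <> 0.
Proof.
  intros Hc Hn. assert (He : 0 < Rabs (f z)) by (apply Rabs_pos_lt; auto).
  destruct (Hc (Rabs (f z)) He) as [d [Hd Hd2]].
  exists d. split; auto. intros t Ht E.
  destruct (Req_dec t z) as [->|Hne]; auto.
  assert (H : R_dist (f t) (f z) < Rabs (f z)) by (apply Hd2; repeat split; auto).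
  unfold R_dist in H. rewrite E, Rminus_0_l, Rabs_Ropp in H. lra.
Qed.

Lemma first_zero_in_interval (f : R -> R) a b : a <= b ->
  (forall t, a <= t <= b -> continuity_pt f t) -> (exists c, a <= c <= b /\ f c = 0) ->
  exists z, a <= z <= b /\ f z = 0 /\ forall y, a <= y < z -> f y <> 0.
Proof.
  intros Hab Hc [c [Hc1 Hc2]].
  destruct (Req_dec (f a) 0) as [Ha|Ha].
  { exists a. split; [lra | split; [auto | intros; lra]]. }
  set (E := fun y => a <= y <= b /\ forall t, a <= t <= y -> f t <> 0).
  assert (HEa : E a) by (split; [lra | intros t Ht; replace t with a by lra; auto]).
  destruct (completeness E) as [z [Hz1 Hz2]].
  { exists b. intros y [Hy _]. lra. }
  { exists a. auto. }
  assert (Haz : a <= z) by (apply Hz1; auto).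
  assert (Hzb : z <= b) by (apply Hz2; intros y [Hy _]; lra).
  assert (Hbefore : forall y, a <= y < z -> f y <> 0).
  { intros y Hy. destruct (Classical_Prop.classic (exists e, E e /\ y < e)) as [[e [[_ He] He2]]|Hn].
    - apply He. lra.
    - exfalso. enough (z <= y) by lra. apply Hz2. intros e He.
      apply Rnot_lt_le. intro. apply Hn. exists e; auto. }
  exists z. split; [lra | split; auto].
  destruct (Req_dec (f z) 0) as [|Hfz]; auto. exfalso.
  destruct (continuity_pt_nonzero_near f z (Hc z ltac:(lra)) Hfz) as [d [Hd Hd2]].
  set (w := Rmin (z + d / 2) b).
  assert (Hw : E w).
  { split; [unfold w; split; [apply Rmin_glb; lra | apply Rmin_r]|].
    intros t Ht. destruct (Rlt_dec t z); [apply Hbefore; lra|].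
    apply Hd2. assert (w <= z + d / 2) by apply Rmin_l. apply Rabs_def1; lra. }
  assert (w <= z) by (apply Hz1; auto).
  assert (w = b).
  { unfold w in *. destruct (Rle_dec (z + d / 2) b); [rewrite Rmin_left in *; lra | rewrite Rmin_right; lra]. }
  destruct Hw as [_ Hw]. apply (Hw c); auto. lra.
Qed.

Lemma Rpower_pos a b : 0 < Rpower a b.
Proof. apply exp_pos. Qed.

Lemma Rpower_1_base x : Rpower 1 x = 1.
Proof. unfold Rpower; rewrite ln_1, Rmult_0_r, exp_0; auto. Qed.

Lemma exp_le_1 x : x <= 0 -> exp x <= 1.
Proof.
  intros Hx. rewrite <- exp_0. destruct (Req_dec x 0) as [->|Hne]; [lra|].
  left; apply exp_increasing; lra.
Qed.

Lemma le_exp_half t : 0 <= t -> t <= exp (t / 2).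
Proof.
  intros Ht. pose proof (exp_ineq1_le (t / 4)) as H.
  replace (t / 2) with (t / 4 + t / 4) by field. rewrite exp_plus.
  pose proof (Rle_0_sqr (1 - t / 4)). unfold Rsqr in *. nra.
Qed.

Lemma Rpower_minus_1 x c : 0 < x -> Rpower x (c - 1) = Rpower x c / x.
Proof. intros. unfold Rminus. rewrite Rpower_plus, Rpower_Ropp, Rpower_1; auto. Qed.

(** * The Gamma function *)

Definition Gamma_integrand (x t : R) := Rpower t (x - 1) * exp (- t).

Definition Gamma_partial (x s : R) := RInt (Gamma_integrand x) 1 s.

Definition Gamma_converges (x L0 L1 : R) :=
  filterlim (Gamma_partial x) (at_right 0) (locally L0) /\
  filterlim (Gamma_partial x) (Rbar_locally p_infty) (locally L1).

Lemma Gamma_integrand_pos x t : 0 < Gamma_integrand x t.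
Proof. apply Rmult_lt_0_compat; [apply Rpower_pos | apply exp_pos]. Qed.

Lemma continuous_Gamma_integrand x t : 0 < t -> continuous (Gamma_integrand x) t.
Proof.
  intros Ht. apply (ex_derive_continuous (Gamma_integrand x)).
  eexists. apply is_derive_Rmult; [apply is_derive_Rpower; auto|].
  apply (is_derive_Rcomp exp Ropp); [auto_derive; auto | apply is_derive_Reals, derivable_pt_lim_exp].
Qed.

Lemma ex_RInt_Gamma_integrand x a b : 0 < a -> 0 < b -> ex_RInt (Gamma_integrand x) a b.
Proof.
  intros Ha Hb. apply (ex_RInt_continuous (V := R_CompleteNormedModule)).
  intros z Hz. apply continuous_Gamma_integrand.
  assert (0 < Rmin a b) by (apply Rmin_glb_lt; auto). lra.
Qed.

Lemma is_derive_Gamma_partial x s : 0 < s -> is_derive (Gamma_partial x) s (Gamma_integrand x s).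
Proof.
  intros Hs. apply is_derive_RInt with (a := 1).
  - apply locally_interval with (a := Finite (s / 2)) (b := p_infty); simpl; try lra.
    intros y Hy _. apply RInt_correct, ex_RInt_Gamma_integrand; lra.
  - apply continuous_Gamma_integrand; auto.
Qed.

Lemma Gamma_partial_1 x : Gamma_partial x 1 = 0.
Proof. unfold Gamma_partial. rewrite RInt_point. reflexivity. Qed.

Lemma Gamma_partial_lt x s t : 0 < s -> s < t -> Gamma_partial x s < Gamma_partial x t.
Proof.
  intros Hs Hst.
  destruct (MVT_interval (Gamma_partial x) (Gamma_integrand x) s t Hst) as [c [Hc E]].
  - intros y Hy; apply is_derive_Gamma_partial; lra.
  - pose proof (Gamma_integrand_pos x c). nra.
Qed.

Lemma Gamma_partial_le x s t : 0 < s -> s <= t -> Gamma_partial x s <= Gamma_partial x t.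
Proof.
  intros Hs Hst. destruct (Req_dec s t) as [<-|Hne]; [lra|].
  left; apply Gamma_partial_lt; lra.
Qed.

Lemma Gamma_integrand_le_exp_half x t : x <= 2 -> 1 <= t -> Gamma_integrand x t <= exp (- t / 2).
Proof.
  intros Hx Ht. unfold Gamma_integrand.
  assert (Rpower t (x - 1) <= t).
  { rewrite <- (Rpower_1 t) at 2 by lra. apply Rle_Rpower; lra. }
  assert (t * exp (- t) <= exp (- t / 2)).
  { replace (- t / 2) with (t / 2 + - t) by field. rewrite exp_plus.
    apply Rmult_le_compat_r; [left; apply exp_pos | apply le_exp_half; lra]. }
  pose proof (exp_pos (- t)). nra.
Qed.

Lemma is_RInt_exp_half a b :
  is_RInt (fun t => exp (- t / 2)) a b (-2 * exp (- b / 2) - -2 * exp (- a / 2)).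
Proof.
  apply (is_RInt_derive (fun t => -2 * exp (- t / 2))).
  - intros y _. auto_derive; auto. change RinvImpl.Rinv with Rinv. unfold Rdiv; field.
  - intros y _. apply (ex_derive_continuous (fun t => exp (- t / 2))). auto_derive; auto.
Qed.

Lemma is_RInt_Rpower x a b : 0 < x -> 0 < a -> 0 < b ->
  is_RInt (fun t => Rpower t (x - 1)) a b (Rpower b x / x - Rpower a x / x).
Proof.
  intros Hx Ha Hb. assert (Hab : 0 < Rmin a b) by (apply Rmin_glb_lt; auto).
  apply (is_RInt_derive (fun t => Rpower t x / x)).
  - intros y Hy. unfold Rdiv. eapply is_derive_val_eq.
    + apply (is_derive_Rmult (fun t => Rpower t x) (fun _ => / x)); [apply is_derive_Rpower; lra|].
      apply (is_derive_const (K := R_AbsRing)).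
    + simpl; unfold zero; simpl. field. lra.
  - intros y Hy. apply (ex_derive_continuous (fun t => Rpower t (x - 1))).
    eexists; apply is_derive_Rpower; lra.
Qed.

Lemma Gamma_partial_le_2 x s : x <= 2 -> 1 <= s -> Gamma_partial x s <= 2.
Proof.
  intros Hx Hs. unfold Gamma_partial.
  apply Rle_trans with (RInt (fun t => exp (- t / 2)) 1 s).
  - apply RInt_le; auto.
    + apply ex_RInt_Gamma_integrand; lra.
    + eexists; apply is_RInt_exp_half.
    + intros y Hy. apply Gamma_integrand_le_exp_half; lra.
  - rewrite (is_RInt_unique _ _ _ _ (is_RInt_exp_half 1 s)).
    pose proof (exp_pos (- s / 2)). pose proof (exp_le_1 (- (1) / 2) ltac:(lra)). lra.
Qed.

Lemma Gamma_partial_ge x s : 0 < x -> 0 < s <= 1 -> - / x <= Gamma_partial x s.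
Proof.
  intros Hx Hs. unfold Gamma_partial.
  rewrite <- opp_RInt_swap by (apply ex_RInt_Gamma_integrand; lra).
  assert (H : RInt (Gamma_integrand x) s 1 <= RInt (fun t => Rpower t (x - 1)) s 1).
  { apply RInt_le; try lra.
    - apply ex_RInt_Gamma_integrand; lra.
    - eexists; apply is_RInt_Rpower; lra.
    - intros y Hy. unfold Gamma_integrand.
      pose proof (exp_le_1 (- y) ltac:(lra)). pose proof (Rpower_pos y (x - 1)). nra. }
  rewrite (is_RInt_unique _ _ _ _ (is_RInt_Rpower x s 1 Hx ltac:(lra) ltac:(lra))), Rpower_1_base in H.
  assert (0 < Rpower s x / x) by (apply Rdiv_lt_0_compat; [apply Rpower_pos | lra]).
  change (opp (RInt (Gamma_integrand x) s 1)) with (- RInt (Gamma_integrand x) s 1).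
  unfold Rdiv in *. lra.
Qed.

Lemma ex_lim_incr_p_infty (F : R -> R) B :
  (forall s t, 1 <= s <= t -> F s <= F t) -> (forall s, 1 <= s -> F s <= B) ->
  exists L, filterlim F (Rbar_locally p_infty) (locally L) /\ forall s, 1 <= s -> F s <= L.
Proof.
  intros Hm Hb.
  destruct (completeness (fun y => exists s, 1 <= s /\ y = F s)) as [L [HL1 HL2]].
  - exists B. intros y [s [Hs ->]]. auto.
  - exists (F 1), 1. split; lra.
  - assert (HFL : forall s, 1 <= s -> F s <= L) by (intros s Hs; apply HL1; exists s; auto).
    exists L. split; auto. apply filterlim_locally. intros eps.
    destruct (Classical_Prop.classic (exists s0, 1 <= s0 /\ L - eps < F s0))
      as [[s0 [Hs0 Hs0']]|Hn].
    + exists s0. intros s Hs. pose proof (Hm s0 s ltac:(lra)). pose proof (HFL s ltac:(lra)).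
      apply ball_of_Rabs, Rabs_def1; lra.
    + exfalso. assert (L <= L - eps); [|destruct eps; simpl in *; lra].
      apply HL2. intros y [s [Hs ->]]. apply Rnot_lt_le. intro. apply Hn. exists s; auto.
Qed.

Lemma ex_lim_incr_at_right_0 (F : R -> R) B :
  (forall s t, 0 < s <= t -> t <= 1 -> F s <= F t) -> (forall s, 0 < s <= 1 -> B <= F s) ->
  exists L, filterlim F (at_right 0) (locally L) /\ forall s, 0 < s <= 1 -> L <= F s.
Proof.
  intros Hm Hb.
  destruct (completeness (fun y => exists s, 0 < s <= 1 /\ y = - F s)) as [L [HL1 HL2]].
  - exists (- B). intros y [s [Hs ->]]. specialize (Hb s Hs). lra.
  - exists (- F 1), 1. split; lra.
  - assert (HFL : forall s, 0 < s <= 1 -> - F s <= L) by (intros s Hs; apply HL1; exists s; auto).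
    exists (- L). split; [|intros s Hs; specialize (HFL s Hs); lra].
    apply filterlim_locally. intros eps.
    destruct (Classical_Prop.classic (exists s0, 0 < s0 <= 1 /\ L - eps < - F s0))
      as [[s0 [Hs0 Hs0']]|Hn].
    + exists (mkposreal s0 (proj1 Hs0)). intros s Hs Hs_pos.
      change (Rabs (s - 0) < s0) in Hs. rewrite Rminus_0_r, Rabs_right in Hs by lra.
      pose proof (Hm s s0 ltac:(lra) ltac:(lra)). pose proof (HFL s ltac:(lra)).
      apply ball_of_Rabs, Rabs_def1; lra.
    + exfalso. assert (L <= L - eps); [|destruct eps; simpl in *; lra].
      apply HL2. intros y [s [Hs ->]]. apply Rnot_lt_le. intro. apply Hn. exists s; auto.
Qed.

Lemma Gamma_converges_base x : 0 < x <= 2 -> exists L0 L1, Gamma_converges x L0 L1 /\ L0 < L1.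
Proof.
  intros Hx.
  destruct (ex_lim_incr_p_infty (Gamma_partial x) 2) as [L1 [H1 H1']].
  { intros s t Hst. apply Gamma_partial_le; lra. }
  { intros; apply Gamma_partial_le_2; lra. }
  destruct (ex_lim_incr_at_right_0 (Gamma_partial x) (- / x)) as [L0 [H0 H0']].
  { intros s t Hst _. apply Gamma_partial_le; lra. }
  { intros; apply Gamma_partial_ge; lra. }
  exists L0, L1. split; [split; auto|].
  pose proof (H0' 1 ltac:(lra)). pose proof (H1' 2 ltac:(lra)).
  pose proof (Gamma_partial_lt x 1 2 ltac:(lra) ltac:(lra)). rewrite Gamma_partial_1 in *. lra.
Qed.

Lemma Gamma_partial_succ x s : 0 < s ->
  Gamma_partial (x + 1) s = exp (- 1) - Rpower s x * exp (- s) + x * Gamma_partial x s.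
Proof.
  intros Hs.
  set (D := fun s => Gamma_partial (x + 1) s - (exp (- 1) - Rpower s x * exp (- s) + x * Gamma_partial x s)).
  assert (E : D s = D 1).
  { apply derive_0_eq. intros y Hy. assert (0 < Rmin s 1) by (apply Rmin_glb_lt; lra).
    eapply is_derive_val_eq.
    - apply is_derive_Rminus; [apply is_derive_Gamma_partial; lra|].
      apply is_derive_Rplus; [apply is_derive_Rminus|].
      + apply (is_derive_const (K := R_AbsRing)).
      + apply is_derive_Rmult; [apply is_derive_Rpower; lra|].
        apply (is_derive_Rcomp exp Ropp); [auto_derive; auto | apply is_derive_Reals, derivable_pt_lim_exp].
      + apply is_derive_Rscal, is_derive_Gamma_partial; lra.
    - unfold Gamma_integrand. replace (x + 1 - 1) with x by ring. simpl; unfold zero; simpl. ring. }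
  unfold D in E. rewrite !Gamma_partial_1, Rpower_1_base in E.
  replace (- (1)) with (-1) in E by ring. lra.
Qed.

Lemma filterlim_Rpower_exp_at_right_0 x : 0 < x ->
  filterlim (fun s => Rpower s x * exp (- s)) (at_right 0) (locally 0).
Proof.
  intros Hx. apply filterlim_locally. intros eps.
  set (d := Rmin (exp (ln eps / x)) 1).
  assert (Hd : 0 < d) by (apply Rmin_glb_lt; [apply exp_pos | lra]).
  exists (mkposreal d Hd). intros s Hs Hs0. apply ball_of_Rabs.
  change (Rabs (s - 0) < d) in Hs. rewrite Rminus_0_r, Rabs_right in Hs by lra.
  assert (Hsx : Rpower s x < eps).
  { unfold Rpower. rewrite <- (exp_ln eps) by apply cond_pos. apply exp_increasing.
    assert (ln s < ln eps / x).
    { rewrite <- (ln_exp (ln eps / x)). apply ln_increasing; auto.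
      pose proof (Rmin_l (exp (ln eps / x)) 1). unfold d in Hs; lra. }
    apply Rmult_lt_reg_r with (/ x); [apply Rinv_0_lt_compat; auto|].
    replace (x * ln s * / x) with (ln s) by (field; lra). auto. }
  pose proof (exp_le_1 (- s) ltac:(lra)). pose proof (exp_pos (- s)). pose proof (Rpower_pos s x).
  rewrite Rminus_0_r, Rabs_right by nra. nra.
Qed.

Lemma filterlim_Rpower_exp_p_infty x :
  filterlim (fun s => Rpower s x * exp (- s)) (Rbar_locally p_infty) (locally 0).
Proof.
  apply (filterlim_ext_loc (fun s => exp (s * (x * (ln s / s) - 1)))).
  { exists 0. intros s Hs. unfold Rpower. rewrite <- exp_plus. f_equal. field. lra. }
  apply (filterlim_comp _ _ _ _ exp _ (Rbar_locally m_infty)); [|apply is_lim_exp_m].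
  change (is_lim (fun s => s * (x * (ln s / s) - 1)) p_infty m_infty).
  replace m_infty with (Rbar_mult p_infty (x * 0 - 1)).
  - apply is_lim_mult; [apply is_lim_id | | simpl; lra].
    apply (is_lim_minus _ _ _ (x * 0) 1); [|apply is_lim_const|reflexivity].
    apply (is_lim_scal_l _ x _ 0), is_lim_div_ln_p.
  - replace (x * 0 - 1) with (-1) by ring. simpl. destruct Rle_dec; [exfalso; lra | reflexivity].
Qed.

Lemma filterlim_affine_comb {F : (R -> Prop) -> Prop} {FF : Filter F} (f g : R -> R) (a b c k : R) :
  filterlim f F (locally a) -> filterlim g F (locally b) ->
  filterlim (fun s => c - f s + k * g s) F (locally (c - a + k * b)).
Proof.
  intros Hf Hg.
  apply (filterlim_comp_2 (G := locally (c - a)) (H := locally (k * b)) _ _ Rplus);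
    [| | apply (filterlim_plus (c - a) (k * b))].
  - apply (filterlim_comp_2 (G := locally c) (H := locally (- a)) (fun _ => c) (fun s => - f s) Rplus);
      [apply filterlim_const | | apply (filterlim_plus c (- a))].
    exact (filterlim_comp _ _ _ f Ropp F (locally a) (locally (- a)) Hf (filterlim_opp a)).
  - apply (filterlim_comp_2 (G := locally k) (H := locally b) (fun _ => k) g Rmult);
      [apply filterlim_const | auto | apply (filterlim_scal k b)].
Qed.

Lemma Gamma_converges_succ x L0 L1 : 0 < x -> Gamma_converges x L0 L1 ->
  Gamma_converges (x + 1) (exp (- 1) + x * L0) (exp (- 1) + x * L1).
Proof.
  intros Hx [H0 H1]. rewrite <- (Rminus_0_r (exp (- 1))). split.
  - eapply filterlim_ext_loc;
      [|apply (filterlim_affine_comb _ _ _ _ _ _ (filterlim_Rpower_exp_at_right_0 x Hx) H0)].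
    exists (mkposreal 1 Rlt_0_1). intros y _ Hy. simpl. rewrite Gamma_partial_succ; auto.
  - eapply filterlim_ext_loc;
      [|apply (filterlim_affine_comb _ _ _ _ _ _ (filterlim_Rpower_exp_p_infty x) H1)].
    exists 0. intros y Hy. simpl. rewrite Gamma_partial_succ; auto.
Qed.

Lemma Gamma_of_converges x L0 L1 : Gamma_converges x L0 L1 -> Gamma x = L1 - L0.
Proof.
  intros [H0 H1]. apply is_RInt_gen_unique.
  assert (Hpos : filter_prod (at_right 0) (Rbar_locally p_infty)
            (fun ab => forall y, Rmin (fst ab) (snd ab) <= y <= Rmax (fst ab) (snd ab) -> 0 < y)).
  { apply Filter_prod with (fun a => 0 < a) (fun b => 0 < b).
    - exists (mkposreal 1 Rlt_0_1). auto.
    - exists 0. auto.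
    - intros a b Ha Hb y Hy. simpl in Hy. assert (0 < Rmin a b) by (apply Rmin_glb_lt; auto). lra. }
  apply (is_RInt_gen_ext (Derive (Gamma_partial x))).
  { eapply filter_imp; [|exact Hpos]. intros [a b] Hab y Hy.
    apply is_derive_unique, is_derive_Gamma_partial, Hab. simpl in *; lra. }
  apply is_RInt_gen_Derive; auto.
  - eapply filter_imp; [|exact Hpos]. intros [a b] Hab y Hy.
    eexists; apply is_derive_Gamma_partial, Hab; auto.
  - eapply filter_imp; [|exact Hpos]. intros [a b] Hab y Hy. specialize (Hab y Hy).
    apply continuous_ext_loc with (Gamma_integrand x); [|apply continuous_Gamma_integrand; auto].
    apply locally_interval with (a := Finite (y / 2)) (b := p_infty); simpl; try lra.
    intros z Hz _. symmetry. apply is_derive_unique, is_derive_Gamma_partial. lra.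
Qed.

Lemma Gamma_converges_shift x k : 0 < x <= 2 ->
  exists L0 L1, Gamma_converges (INR k + x) L0 L1 /\ L0 < L1.
Proof.
  intros Hx. induction k as [|k [L0 [L1 [HG HL]]]].
  - simpl. rewrite Rplus_0_l. apply Gamma_converges_base; auto.
  - pose proof (pos_INR k).
    exists (exp (- 1) + (INR k + x) * L0), (exp (- 1) + (INR k + x) * L1). split.
    + rewrite S_INR, (Rplus_comm (INR k) 1), Rplus_assoc, Rplus_comm.
      apply Gamma_converges_succ; auto. lra.
    + apply Rplus_lt_compat_l, Rmult_lt_compat_l; lra.
Qed.

Lemma Gamma_shift_pos x k : 0 < x <= 2 -> 0 < Gamma (INR k + x).
Proof.
  intros Hx. destruct (Gamma_converges_shift x k Hx) as [L0 [L1 [HG HL]]].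
  rewrite (Gamma_of_converges _ _ _ HG). lra.
Qed.

Lemma Gamma_shift_succ x k : 0 < x <= 2 ->
  Gamma (INR k + x + 1) = (INR k + x) * Gamma (INR k + x).
Proof.
  intros Hx. destruct (Gamma_converges_shift x k Hx) as [L0 [L1 [HG HL]]].
  pose proof (pos_INR k).
  rewrite (Gamma_of_converges _ _ _ (Gamma_converges_succ (INR k + x) _ _ ltac:(lra) HG)).
  rewrite (Gamma_of_converges _ _ _ HG). ring.
Qed.

(** * The Bessel series *)

Fixpoint bessel_coef (mu : R) (n : nat) : R :=
  match n with
  | O => 1
  | S m => - bessel_coef mu m / ((INR m + 1) * (INR m + 1 + mu))
  end.

Lemma bessel_coef_S mu n :
  bessel_coef mu (S n) = - bessel_coef mu n / ((INR n + 1) * (INR n + 1 + mu)).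
Proof. reflexivity. Qed.

Definition bessel_ser mu z := PSeries (bessel_coef mu) z.
Definition bessel_ser' mu z := PSeries (PS_derive (bessel_coef mu)) z.
Definition bessel_ser'' mu z := PSeries (PS_derive (PS_derive (bessel_coef mu))) z.

Section BesselSeries.

Variable mu : R.
Hypothesis mu_gt_m1 : -1 < mu.

Lemma bessel_den_pos m : 0 < (INR m + 1) * (INR m + 1 + mu).
Proof. pose proof (pos_INR m). apply Rmult_lt_0_compat; lra. Qed.

Lemma bessel_coef_neq0 n : bessel_coef mu n <> 0.
Proof.
  induction n as [|n IH]; simpl; [lra|].
  pose proof (bessel_den_pos n). unfold Rdiv. apply Rmult_integral_contrapositive.
  split; [lra | apply Rinv_neq_0_compat; lra].
Qed.

Lemma Rabs_bessel_coef_S n :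
  Rabs (bessel_coef mu (S n)) = Rabs (bessel_coef mu n) / ((INR n + 1) * (INR n + 1 + mu)).
Proof.
  pose proof (bessel_den_pos n). simpl.
  unfold Rdiv. rewrite Rabs_mult, Rabs_Ropp, Rabs_inv, (Rabs_right (_ * _)) by lra. auto.
Qed.

Lemma CV_radius_bessel_coef : CV_radius (bessel_coef mu) = p_infty.
Proof.
  apply CV_radius_infinite_DAlembert; [apply bessel_coef_neq0|].
  apply is_lim_seq_le_le with (fun _ => 0) (fun n => / (1 + mu) * / INR (S n)).
  - intros n. pose proof (bessel_den_pos n). pose proof (pos_INR n).
    pose proof (Rabs_pos_lt _ (bessel_coef_neq0 n)).
    unfold Rdiv. rewrite Rabs_mult, Rabs_inv, Rabs_bessel_coef_S, S_INR.
    replace (Rabs (bessel_coef mu n) / ((INR n + 1) * (INR n + 1 + mu)) * / Rabs (bessel_coef mu n))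
      with (/ ((INR n + 1) * (INR n + 1 + mu))) by (field; lra).
    rewrite <- Rinv_mult. split; [left; apply Rinv_0_lt_compat; auto|].
    apply Rinv_le_contravar; [apply Rmult_lt_0_compat; lra | nra].
  - apply is_lim_seq_const.
  - replace (Finite 0) with (Rbar_mult (/ (1 + mu)) 0) by (simpl; f_equal; ring).
    apply is_lim_seq_scal_l, (is_lim_seq_incr_1 (fun n => / INR n)).
    replace (Finite 0) with (Rbar_inv p_infty) by reflexivity.
    apply is_lim_seq_inv; [apply is_lim_seq_INR | discriminate].
Qed.

Lemma CV_radius_bessel_coef_derive : CV_radius (PS_derive (bessel_coef mu)) = p_infty.
Proof. rewrite CV_radius_derive; apply CV_radius_bessel_coef. Qed.

Lemma CV_radius_bessel_coef_derive2 : CV_radius (PS_derive (PS_derive (bessel_coef mu))) = p_infty.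
Proof. rewrite !CV_radius_derive; apply CV_radius_bessel_coef. Qed.

Lemma is_derive_bessel_ser z : is_derive (bessel_ser mu) z (bessel_ser' mu z).
Proof. apply is_derive_PSeries. rewrite CV_radius_bessel_coef; simpl; auto. Qed.

Lemma is_derive_bessel_ser' z : is_derive (bessel_ser' mu) z (bessel_ser'' mu z).
Proof. apply is_derive_PSeries. rewrite CV_radius_bessel_coef_derive; simpl; auto. Qed.

Lemma bessel_ser_ode z :
  z * bessel_ser'' mu z + (mu + 1) * bessel_ser' mu z + bessel_ser mu z = 0.
Proof.
  unfold bessel_ser, bessel_ser', bessel_ser''.
  assert (H2 : ex_pseries (PS_incr_1 (PS_derive (PS_derive (bessel_coef mu)))) z).
  { apply ex_pseries_incr_1, CV_radius_inside. rewrite CV_radius_bessel_coef_derive2; simpl; auto. }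
  assert (H1 : ex_pseries (PS_scal (mu + 1) (PS_derive (bessel_coef mu))) z).
  { apply CV_radius_inside. rewrite CV_radius_scal by lra.
    rewrite CV_radius_bessel_coef_derive; simpl; auto. }
  assert (H0 : ex_pseries (bessel_coef mu) z).
  { apply CV_radius_inside. rewrite CV_radius_bessel_coef; simpl; auto. }
  rewrite <- PSeries_incr_1, <- PSeries_scal, <- PSeries_plus, <- PSeries_plus by
    (try apply ex_pseries_plus; auto).
  rewrite (PSeries_ext _ (fun _ => 0)); [apply PSeries_const_0|].
  intros [|m].
  - unfold PS_plus, PS_incr_1, PS_scal, PS_derive. simpl. unfold mult; simpl.
    change (0 + (mu + 1) * (1 * (- (1) / ((0 + 1) * (0 + 1 + mu)))) + 1 = 0). field. lra.
  - unfold PS_plus, PS_incr_1, PS_scal, PS_derive. cbn -[INR bessel_coef Rdiv].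
    pose proof (bessel_den_pos (S m)). rewrite (bessel_coef_S mu (S m)).
    rewrite !S_INR in *. pose proof (pos_INR m). field. split; lra.
Qed.

End BesselSeries.

Lemma Gamma_bessel_pos mu k : -1 < mu <= 1 -> 0 < Gamma (INR k + mu + 1).
Proof. intros Hmu. rewrite Rplus_assoc. apply Gamma_shift_pos. lra. Qed.

Lemma Gamma_bessel_succ mu k : -1 < mu <= 1 ->
  Gamma (INR (S k) + mu + 1) = (INR k + mu + 1) * Gamma (INR k + mu + 1).
Proof.
  intros Hmu. replace (INR (S k) + mu + 1) with (INR k + (mu + 1) + 1) by (rewrite S_INR; ring).
  rewrite !(Rplus_assoc (INR k) mu). apply Gamma_shift_succ. lra.
Qed.

Lemma BesselJ_coef_eq mu k : -1 < mu <= 1 ->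
  (-1) ^ k / (INR (fact k) * Gamma (INR k + mu + 1)) = bessel_coef mu k / Gamma (mu + 1).
Proof.
  intros Hmu. pose proof (Gamma_bessel_pos mu 0 Hmu) as H0. rewrite Rplus_0_l in H0.
  induction k as [|k IH].
  - rewrite Rplus_0_l. unfold fact, INR, pow, bessel_coef. field. lra.
  - pose proof (Gamma_bessel_pos mu k Hmu). pose proof (bessel_den_pos mu ltac:(lra) k).
    pose proof (INR_fact_lt_0 k). pose proof (pos_INR k).
    rewrite Gamma_bessel_succ, bessel_coef_S, fact_simpl, mult_INR, S_INR by auto.
    replace (bessel_coef mu k) with ((-1) ^ k / (INR (fact k) * Gamma (INR k + mu + 1)) * Gamma (mu + 1))
      by (rewrite IH; field; lra).
    rewrite <- tech_pow_Rmult. field. repeat split; lra.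
Qed.

Lemma BesselJ_bessel_ser mu y : -1 < mu <= 1 -> 0 < y ->
  BesselJ mu y = Rpower (y / 2) mu / Gamma (mu + 1) * bessel_ser mu (y * y / 4).
Proof.
  intros Hmu Hy. pose proof (Gamma_bessel_pos mu 0 Hmu) as H0. rewrite Rplus_0_l in H0.
  unfold BesselJ, bessel_ser, PSeries.
  rewrite <- Series_scal_l. apply Series_ext. intros k.
  rewrite BesselJ_coef_eq, Rpower_plus by auto.
  replace (2 * INR k) with (INR (2 * k)) by (rewrite mult_INR; simpl; ring).
  rewrite Rpower_pow, pow_mult by lra.
  replace ((y / 2) ^ 2) with (y * y / 4) by (simpl; field).
  field. lra.
Qed.

Lemma Rabs_Series_le_geom (a : nat -> R) r : 0 <= r < 1 ->
  (forall n, Rabs (a (S n)) <= r * Rabs (a n)) -> Rabs (Series a) <= Rabs (a 0%nat) / (1 - r).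
Proof.
  intros Hr Ha.
  assert (Hb : forall n, Rabs (a n) <= Rabs (a 0%nat) * r ^ n).
  { induction n as [|n IH]; simpl; [lra|].
    apply Rle_trans with (r * Rabs (a n)); [auto|].
    replace (Rabs (a 0%nat) * (r * r ^ n)) with (r * (Rabs (a 0%nat) * r ^ n)) by ring.
    apply Rmult_le_compat_l; lra. }
  assert (Hg : ex_series (fun n => Rabs (a 0%nat) * r ^ n)).
  { apply (ex_series_scal_l (Rabs (a 0%nat)) (fun n => r ^ n)), ex_series_geom.
    rewrite Rabs_right; lra. }
  assert (Hex : ex_series (fun n => Rabs (a n))).
  { apply (ex_series_le (K := R_AbsRing) (V := R_CompleteNormedModule)) with (2 := Hg).
    intros n. unfold norm; simpl. unfold abs; simpl. rewrite Rabs_Rabsolu. auto. }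
  eapply Rle_trans; [apply Series_Rabs; auto|].
  eapply Rle_trans; [apply Series_le with (b := fun n => Rabs (a 0%nat) * r ^ n); auto|].
  - intros n; split; [apply Rabs_pos | auto].
  - rewrite Series_scal_l, Series_geom by (rewrite Rabs_right; lra). unfold Rdiv. lra.
Qed.

(** * The normalised Bessel function [U] *)

(* [U mu x = 2^mu Gamma(mu+1) sqrt x J_mu(x)]. *)
Definition U mu x := Rpower x (mu + 1/2) * bessel_ser mu (x * x / 4).

Definition U' mu x := Rpower x (mu + 1/2) *
  ((mu + 1/2) / x * bessel_ser mu (x * x / 4) + x / 2 * bessel_ser' mu (x * x / 4)).

Definition Q mu x := 1 + (1/4 - mu * mu) / (x * x).

Lemma Q_opp mu x : Q (- mu) x = Q mu x.
Proof. unfold Q. f_equal. f_equal. ring. Qed.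


Section BesselU.

Variable mu : R.
Hypothesis mu_gt_m1 : -1 < mu.

Lemma is_derive_bessel_ser_sq x :
  is_derive (fun x => bessel_ser mu (x * x / 4)) x (x / 2 * bessel_ser' mu (x * x / 4)).
Proof.
  apply (is_derive_Rcomp (bessel_ser mu) (fun x => x * x / 4)); [auto_derive; auto; field|].
  apply is_derive_bessel_ser; auto.
Qed.

Lemma is_derive_bessel_ser'_sq x :
  is_derive (fun x => bessel_ser' mu (x * x / 4)) x (x / 2 * bessel_ser'' mu (x * x / 4)).
Proof.
  apply (is_derive_Rcomp (bessel_ser' mu) (fun x => x * x / 4)); [auto_derive; auto; field|].
  apply is_derive_bessel_ser'; auto.
Qed.

Lemma is_derive_U x : 0 < x -> is_derive (U mu) x (U' mu x).
Proof.
  intros Hx. unfold U, U'. eapply is_derive_val_eq.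
  - apply is_derive_Rmult; [apply is_derive_Rpower; auto | apply is_derive_bessel_ser_sq].
  - cbv beta. rewrite Rpower_minus_1 by auto. field. lra.
Qed.

Lemma is_derive_U' x : 0 < x -> is_derive (U' mu) x (- Q mu x * U mu x).
Proof.
  intros Hx. unfold U'. eapply is_derive_val_eq.
  - apply is_derive_Rmult; [apply is_derive_Rpower; auto|].
    apply is_derive_Rplus; apply is_derive_Rmult.
    + auto_derive; [lra | reflexivity].
    + apply is_derive_bessel_ser_sq.
    + auto_derive; [auto | reflexivity].
    + apply is_derive_bessel_ser'_sq.
  - pose proof (bessel_ser_ode mu mu_gt_m1 (x * x / 4)) as Hode.
    set (F := bessel_ser mu (x * x / 4)) in *. set (G := bessel_ser' mu (x * x / 4)) in *.
    set (H := bessel_ser'' mu (x * x / 4)) in *.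
    assert (Hz : x * x / 4 <> 0) by nra.
    replace H with (- ((mu + 1) * G + F) / (x * x / 4))
      by (apply (Rmult_eq_reg_l (x * x / 4)); [field_simplify; lra | auto]).
    unfold U, Q. fold F. cbv beta. fold G. rewrite Rpower_minus_1 by auto. field. lra.
Qed.

Lemma continuity_pt_U x : 0 < x -> continuity_pt (U mu) x.
Proof. intros Hx. apply (is_derive_continuity_pt _ _ _ (is_derive_U x Hx)). Qed.

Lemma continuity_pt_U' x : 0 < x -> continuity_pt (U' mu) x.
Proof. intros Hx. apply (is_derive_continuity_pt _ _ _ (is_derive_U' x Hx)). Qed.

End BesselU.

(* [wronskian_ser mu (x * x / 4)] is the Wronskian of [U mu] and [U (- mu)]; as a function of
   [z = x^2/4] it can be evaluated at [z = 0]. *)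
Definition wronskian_ser mu z :=
  -2 * mu * bessel_ser mu z * bessel_ser (- mu) z
  + 2 * z * (bessel_ser mu z * bessel_ser' (- mu) z - bessel_ser (- mu) z * bessel_ser' mu z).

Lemma wronskian_ser_const mu z : -1 < mu < 1 -> wronskian_ser mu z = -2 * mu.
Proof.
  intros Hmu. assert (Hp : -1 < mu) by lra. assert (Hm : -1 < - mu) by lra.
  transitivity (wronskian_ser mu 0).
  - apply (derive_0_eq (wronskian_ser mu)). intros y _. unfold wronskian_ser. eapply is_derive_val_eq.
    + apply is_derive_Rplus; [apply is_derive_Rmult|apply is_derive_Rmult].
      * apply is_derive_Rscal, is_derive_bessel_ser; auto.
      * apply is_derive_bessel_ser; auto.
      * apply is_derive_Rscal, (is_derive_id (K := R_AbsRing)).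
      * apply is_derive_Rminus; apply is_derive_Rmult.
        -- apply is_derive_bessel_ser; auto.
        -- apply is_derive_bessel_ser'; auto.
        -- apply is_derive_bessel_ser; auto.
        -- apply is_derive_bessel_ser'; auto.
    + pose proof (bessel_ser_ode mu Hp y) as Ef. pose proof (bessel_ser_ode (- mu) Hm y) as Eg.
      simpl. unfold one; simpl.
      set (f0 := bessel_ser mu y) in *. set (f1 := bessel_ser' mu y) in *. set (f2 := bessel_ser'' mu y) in *.
      set (g0 := bessel_ser (- mu) y) in *. set (g1 := bessel_ser' (- mu) y) in *.
      set (g2 := bessel_ser'' (- mu) y) in *.
      transitivity (2 * f0 * (y * g2 + (- mu + 1) * g1 + g0) - 2 * g0 * (y * f2 + (mu + 1) * f1 + f0));
        [ring | rewrite Ef, Eg; ring].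
  - unfold wronskian_ser, bessel_ser. rewrite !PSeries_0. simpl. ring.
Qed.

Lemma U_wronskian mu x : -1 < mu < 1 -> 0 < x ->
  U mu x * U' (- mu) x - U' mu x * U (- mu) x = -2 * mu.
Proof.
  intros Hmu Hx. rewrite <- (wronskian_ser_const mu (x * x / 4)) by auto. unfold U, U', wronskian_ser.
  assert (Hprod : Rpower x (mu + 1/2) * Rpower x (- mu + 1/2) = x).
  { rewrite <- Rpower_plus. replace (mu + 1/2 + (- mu + 1/2)) with 1 by field. apply Rpower_1; auto. }
  set (A := Rpower x (mu + 1/2)) in *. set (B := Rpower x (- mu + 1/2)) in *.
  transitivity (A * B * (-2 * mu / x * bessel_ser mu (x * x / 4) * bessel_ser (- mu) (x * x / 4)
    + x / 2 * (bessel_ser mu (x * x / 4) * bessel_ser' (- mu) (x * x / 4)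
               - bessel_ser (- mu) (x * x / 4) * bessel_ser' mu (x * x / 4)))).
  - field. lra.
  - rewrite Hprod. field. lra.
Qed.

Definition energy mu x := Q mu x * U mu x * U mu x + U' mu x * U' mu x.

Definition sonin mu x := U mu x * U mu x + U' mu x * U' mu x / Q mu x.

Lemma is_derive_Q mu x : 0 < x -> is_derive (Q mu) x (-2 * (1/4 - mu * mu) / (x * x * x)).
Proof. intros Hx. unfold Q. auto_derive; [nra|]. change RinvImpl.Rinv with Rinv. field. lra. Qed.

Lemma U_at_1 mu : U mu 1 = bessel_ser mu (1/4).
Proof. unfold U. rewrite Rpower_1_base. replace (1 * 1 / 4) with (1/4) by field. ring. Qed.

Lemma U'_at_1 mu : U' mu 1 = (mu + 1/2) * bessel_ser mu (1/4) + 1/2 * bessel_ser' mu (1/4).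
Proof. unfold U'. rewrite Rpower_1_base. replace (1 * 1 / 4) with (1/4) by field. field. Qed.

Lemma Q_le mu x : 1 <= x -> Q mu x <= 5/4.
Proof.
  intros Hx. unfold Q. enough ((1/4 - mu * mu) / (x * x) <= 1/4) by lra.
  apply Rmult_le_reg_r with (x * x); [nra|].
  unfold Rdiv. rewrite Rmult_assoc, Rinv_l by nra. nra.
Qed.

(** * Oscillation of [U] *)

Section HalfOrder.

Variable mu : R.
Hypothesis mu_half : -1/2 <= mu <= 1/2.

Lemma Q_ge_1 x : 0 < x -> 1 <= Q mu x.
Proof. intros Hx. unfold Q. assert (0 <= (1/4 - mu * mu) / (x * x)) by (apply Rdiv_le_0_compat; nra). lra. Qed.

Lemma energy_decr a b : 0 < a <= b -> energy mu b <= energy mu a.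
Proof.
  intros Hab.
  enough (energy mu b - energy mu a <= 0 * (b - a)) by lra.
  apply (increment_le_of_derive_le (energy mu)
           (fun x => -2 * (1/4 - mu * mu) / (x * x * x) * U mu x * U mu x)); try lra.
  - intros x Hx. unfold energy. eapply is_derive_val_eq.
    + apply is_derive_Rplus; apply is_derive_Rmult.
      * apply is_derive_Rmult; [apply is_derive_Q | apply is_derive_U]; lra.
      * apply is_derive_U; lra.
      * apply is_derive_U'; lra.
      * apply is_derive_U'; lra.
    + cbv beta. ring.
  - intros x Hx. rewrite Rmult_assoc. apply Rmult_le_0_r; [|apply Rle_0_sqr].
    unfold Rdiv. apply Rmult_le_0_r; [nra|]. left; apply Rinv_0_lt_compat. apply Rmult_lt_0_compat; nra.
Qed.

Lemma sonin_incr a b : 0 < a <= b -> sonin mu a <= sonin mu b.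
Proof.
  intros Hab.
  enough (0 * (b - a) <= sonin mu b - sonin mu a) by lra.
  apply (increment_ge_of_derive_ge (sonin mu)
           (fun x => 2 * (1/4 - mu * mu) / (x * x * x) * (U' mu x * U' mu x) / (Q mu x * Q mu x))); try lra.
  - intros x Hx. pose proof (Q_ge_1 x ltac:(lra)). unfold sonin. eapply is_derive_val_eq.
    + apply is_derive_Rplus; [apply is_derive_Rmult; apply is_derive_U; lra|].
      unfold Rdiv at 1. apply is_derive_Rmult; [apply is_derive_Rmult; apply is_derive_U'; lra|].
      apply is_derive_Rinv; [apply is_derive_Q; lra | lra].
    + cbv beta. field. split; lra.
  - intros x Hx. pose proof (Q_ge_1 x ltac:(lra)). apply Rdiv_le_0_compat; [|nra].
    apply Rmult_le_pos; [|apply Rle_0_sqr]. apply Rdiv_le_0_compat; [nra | repeat apply Rmult_lt_0_compat; lra].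
Qed.

Lemma U_sturm c : 0 < c -> exists y, c <= y <= c + PI /\ U mu y = 0.
Proof.
  intros Hc. pose proof PI_RGT_0 as HPI.
  apply Classical_Prop.NNPP. intro Hno.
  assert (Hsign : forall y, c <= y <= c + PI -> 0 < U mu c * U mu y).
  { intros y Hy. destruct (Rtotal_order (U mu c * U mu y) 0) as [Hl|[Hl|Hl]]; auto.
    - destruct (IVT_sign_change (U mu) c y ltac:(lra)) as [z [Hz Ez]]; auto.
      + intros t Ht; apply continuity_pt_U; lra.
      + exfalso; apply Hno. exists z. split; auto; lra.
    - exfalso. apply Rmult_integral in Hl. destruct Hl; apply Hno; [exists c | exists y]; split; auto; lra. }
  (* Sturm comparison with [sin (x - c)], a solution of [y'' + y = 0], using [Q >= 1]. *)
  set (h := fun x => U' mu x * sin (x - c) - U mu x * cos (x - c)).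
  set (dh := fun x => (1 - Q mu x) * U mu x * sin (x - c)).
  assert (HD : forall x, c <= x <= c + PI -> is_derive h x (dh x)).
  { intros x Hx. unfold h, dh. eapply is_derive_val_eq.
    - apply is_derive_Rminus; apply is_derive_Rmult.
      + apply is_derive_U'; lra.
      + apply (is_derive_Rcomp sin (fun x => x - c)); [auto_derive; auto | apply is_derive_Reals, derivable_pt_lim_sin].
      + apply is_derive_U; lra.
      + apply (is_derive_Rcomp cos (fun x => x - c)); [auto_derive; auto | apply is_derive_Reals, derivable_pt_lim_cos].
    - cbv beta. ring. }
  assert (Hh0 : h c = - U mu c) by (unfold h; rewrite Rminus_diag, sin_0, cos_0; ring).
  assert (HhPI : h (c + PI) = U mu (c + PI))
    by (unfold h; replace (c + PI - c) with PI by ring; rewrite sin_PI, cos_PI; ring).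
  assert (Hdh : forall x, c <= x <= c + PI -> U mu c * dh x <= 0).
  { intros x Hx. unfold dh. pose proof (Hsign x Hx). pose proof (Q_ge_1 x ltac:(lra)).
    pose proof (sin_ge_0 (x - c) ltac:(lra) ltac:(lra)).
    replace (U mu c * ((1 - Q mu x) * U mu x * sin (x - c)))
      with ((1 - Q mu x) * ((U mu c * U mu x) * sin (x - c))) by ring.
    apply Rmult_le_0_r; [lra | apply Rmult_le_pos; lra]. }
  pose proof (Hsign (c + PI) ltac:(lra)). pose proof (Hsign c ltac:(lra)).
  assert (Hinc : U mu c * h (c + PI) - U mu c * h c <= 0 * (c + PI - c)).
  { apply (increment_le_of_derive_le (fun x => U mu c * h x) (fun x => U mu c * dh x)); try lra.
    - intros x Hx. apply is_derive_Rscal, HD; auto.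
    - auto. }
  rewrite Hh0, HhPI in Hinc. nra.
Qed.

End HalfOrder.

Section SmallOrder.

Variable mu : R.
Hypothesis mu_small : -1/10 <= mu <= 1/10.

Let mu_gt_m1 : -1 < mu.
Proof. lra. Qed.

Let mu_half : -1/2 <= mu <= 1/2.
Proof. lra. Qed.

Lemma bessel_ser_near_1 z : 0 <= z <= 1/4 -> Rabs (bessel_ser mu z - 1) <= z * (125/100).
Proof.
  intros Hz. unfold bessel_ser.
  rewrite PSeries_decr_1 by (apply CV_radius_inside; rewrite CV_radius_bessel_coef; simpl; auto).
  simpl bessel_coef at 1.
  replace (1 + z * PSeries (PS_decr_1 (bessel_coef mu)) z - 1)
    with (z * PSeries (PS_decr_1 (bessel_coef mu)) z) by ring.
  rewrite Rabs_mult, Rabs_right by lra. apply Rmult_le_compat_l; [lra|].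
  unfold PSeries, PS_decr_1.
  eapply Rle_trans; [apply Rabs_Series_le_geom with (r := 1/10); [lra|]|].
  - intros n. rewrite !Rabs_mult, (Rabs_bessel_coef_S mu mu_gt_m1 (S n)). simpl pow.
    rewrite Rabs_mult, (Rabs_right z) by lra.
    pose proof (bessel_den_pos mu mu_gt_m1 (S n)). pose proof (pos_INR n).
    pose proof (Rabs_pos (bessel_coef mu (S n))). pose proof (Rabs_pos (z ^ n)).
    rewrite S_INR in *.
    assert (z / ((INR n + 1 + 1) * (INR n + 1 + 1 + mu)) <= 1/10).
    { apply Rmult_le_reg_r with ((INR n + 1 + 1) * (INR n + 1 + 1 + mu)); [lra|].
      unfold Rdiv. rewrite Rmult_assoc, Rinv_l by lra. nra. }
    replace (Rabs (bessel_coef mu (S n)) / ((INR n + 1 + 1) * (INR n + 1 + 1 + mu)) * (z * Rabs (z ^ n)))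
      with ((z / ((INR n + 1 + 1) * (INR n + 1 + 1 + mu))) * (Rabs (bessel_coef mu (S n)) * Rabs (z ^ n)))
      by (field; lra).
    apply Rmult_le_compat_r; [apply Rmult_le_pos|]; auto.
  - simpl. rewrite Rmult_1_r. unfold Rdiv. rewrite Rabs_mult, Rabs_Ropp, Rabs_R1, Rabs_inv.
    rewrite Rabs_right by lra.
    replace (1 * / ((0 + 1) * (0 + 1 + mu)) * / (1 - 1 * / 10)) with (/ ((1 + mu) * (9/10))) by (field; lra).
    replace (125 * / 100) with (/ (8/10)) by field. apply Rinv_le_contravar; nra.
Qed.

Lemma bessel_ser'_near z : 0 <= z <= 1/4 ->
  Rabs (bessel_ser' mu z - bessel_coef mu 1) <= z * (66/100).
Proof.
  intros Hz. unfold bessel_ser'.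
  rewrite PSeries_decr_1 by (apply CV_radius_inside; rewrite CV_radius_bessel_coef_derive; simpl; auto).
  replace (PS_derive (bessel_coef mu) 0%nat) with (bessel_coef mu 1) by (unfold PS_derive; simpl; ring).
  replace (bessel_coef mu 1 + z * PSeries (PS_decr_1 (PS_derive (bessel_coef mu))) z - bessel_coef mu 1)
    with (z * PSeries (PS_decr_1 (PS_derive (bessel_coef mu))) z) by ring.
  rewrite Rabs_mult, Rabs_right by lra. apply Rmult_le_compat_l; [lra|].
  unfold PSeries, PS_decr_1, PS_derive.
  eapply Rle_trans; [apply Rabs_Series_le_geom with (r := 1/10); [lra|]|].
  - intros n. rewrite (bessel_coef_S mu (S (S n))). simpl pow.
    set (B := bessel_coef mu (S (S n))). set (Z := z ^ n).
    rewrite !S_INR. pose proof (pos_INR n).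
    replace ((INR n + 1 + 1 + 1) * (- B / ((INR n + 1 + 1 + 1) * (INR n + 1 + 1 + 1 + mu))) * (z * Z))
      with ((INR n + 1 + 1) * B * Z * (- z / ((INR n + 1 + 1) * (INR n + 1 + 1 + 1 + mu))))
      by (field; repeat split; lra).
    rewrite (Rabs_mult _ (- z / _)), Rmult_comm. apply Rmult_le_compat_r; [apply Rabs_pos|].
    unfold Rdiv. rewrite Rabs_mult, Rabs_Ropp, Rabs_inv, !Rabs_right by nra.
    apply Rmult_le_reg_r with ((INR n + 1 + 1) * (INR n + 1 + 1 + 1 + mu)); [nra|].
    rewrite Rmult_assoc, Rinv_l by nra. nra.
  - simpl. rewrite Rmult_1_r. unfold Rdiv. rewrite !Rmult_1_l, !Rplus_0_l, !Rmult_1_l.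
    replace ((1 + 1) * (- (- (1) * / (1 + mu)) * / ((1 + 1) * (1 + 1 + mu))))
      with (/ ((1 + mu) * (2 + mu))) by (field; lra).
    rewrite Rabs_right by (left; apply Rinv_0_lt_compat; nra).
    replace (/ ((1 + mu) * (2 + mu)) * / (1 - / 10)) with (/ ((1 + mu) * (2 + mu) * (9/10))) by (field; lra).
    replace (66 * / 100) with (/ (100/66)) by field. apply Rinv_le_contravar; nra.
Qed.


Lemma bessel_ser_bounds z : 0 <= z <= 1/4 -> 6875/10000 <= bessel_ser mu z <= 13125/10000.
Proof. intros Hz. pose proof (bessel_ser_near_1 z Hz) as H. apply Rabs_le_between in H. lra. Qed.

Lemma U_pos x : 0 < x <= 1 -> 0 < U mu x.
Proof.
  intros Hx. apply Rmult_lt_0_compat; [apply Rpower_pos|].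
  pose proof (bessel_ser_bounds (x * x / 4) ltac:(split; nra)). lra.
Qed.

Lemma Rabs_U'_1 : Rabs (U' mu 1) <= 42/100.
Proof.
  rewrite U'_at_1.
  pose proof (bessel_ser_bounds (1/4) ltac:(lra)) as HF.
  pose proof (bessel_ser'_near (1/4) ltac:(lra)) as HG. apply Rabs_le_between in HG.
  replace (bessel_coef mu 1) with (- / (1 + mu)) in HG by (simpl; field; lra).
  assert (10/11 <= / (1 + mu) <= 10/9).
  { split; [replace (10/11) with (/ (11/10)) by field | replace (10/9) with (/ (9/10)) by field];
      apply Rinv_le_contravar; lra. }
  apply Rabs_le. split; nra.
Qed.

Lemma energy_1 : energy mu 1 <= 233/100.
Proof.
  unfold energy. rewrite U_at_1.
  pose proof (bessel_ser_bounds (1/4) ltac:(lra)).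
  pose proof (Rabs_U'_1) as HU'. apply Rabs_le_between in HU'.
  pose proof (Q_le mu 1 ltac:(lra)). pose proof (Q_ge_1 mu mu_half 1 ltac:(lra)).
  set (F := bessel_ser mu (1/4)) in *. set (G := U' mu 1) in *. set (q := Q mu 1) in *.
  assert (F * F <= 13125/10000 * (13125/10000)) by nra.
  assert (G * G <= 42/100 * (42/100)) by nra.
  nra.
Qed.

Lemma sonin_1 : 47/100 <= sonin mu 1.
Proof.
  unfold sonin. rewrite U_at_1.
  pose proof (bessel_ser_bounds (1/4) ltac:(lra)). pose proof (Q_ge_1 mu mu_half 1 ltac:(lra)).
  assert (0 <= U' mu 1 * U' mu 1 / Q mu 1) by (apply Rdiv_le_0_compat; [apply Rle_0_sqr | lra]).
  nra.
Qed.

Lemma U_bounds x : 1 <= x -> Rabs (U mu x) <= 2 /\ Rabs (U' mu x) <= 2.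
Proof.
  intros Hx. pose proof (energy_decr mu mu_half 1 x ltac:(lra)). pose proof energy_1.
  pose proof (Q_ge_1 mu mu_half x ltac:(lra)). unfold energy in *.
  pose proof (Rle_0_sqr (U mu x)). pose proof (Rle_0_sqr (U' mu x)). unfold Rsqr in *.
  split; apply Rabs_le; split; nra.
Qed.

Lemma Rabs_U''_le x : 1 <= x -> Rabs (- Q mu x * U mu x) <= 5/2.
Proof.
  intros Hx. destruct (U_bounds x Hx) as [HU _].
  pose proof (Q_le mu x Hx). pose proof (Q_ge_1 mu mu_half x ltac:(lra)).
  rewrite Ropp_mult_distr_l_reverse, Rabs_Ropp, Rabs_mult, (Rabs_right (Q mu x)) by lra.
  pose proof (Rabs_pos (U mu x)). nra.
Qed.

Lemma sonin_ge x : 1 <= x -> 47/100 <= sonin mu x.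
Proof. intros Hx. pose proof (sonin_incr mu mu_half 1 x ltac:(lra)). pose proof sonin_1. lra. Qed.

Lemma U'_sq_at_zero x : 1 <= x -> U mu x = 0 -> 47/100 <= U' mu x * U' mu x.
Proof.
  intros Hx H0. pose proof (sonin_ge x Hx) as H. unfold sonin in H. rewrite H0 in H.
  pose proof (Q_ge_1 mu mu_half x ltac:(lra)). pose proof (Rle_0_sqr (U' mu x)). unfold Rsqr in *.
  assert (U' mu x * U' mu x / Q mu x <= U' mu x * U' mu x).
  { unfold Rdiv. rewrite <- (Rmult_1_r (U' mu x * U' mu x)) at 2.
    apply Rmult_le_compat_l; auto. rewrite <- Rinv_1. apply Rinv_le_contravar; lra. }
  lra.
Qed.

Lemma U'_at_zero_cases x : 1 <= x -> U mu x = 0 -> 6/10 <= U' mu x \/ U' mu x <= -6/10.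
Proof.
  intros Hx H0. pose proof (U'_sq_at_zero x Hx H0).
  destruct (Rle_or_lt (6/10) (U' mu x)); [auto|]. right. nra.
Qed.

Lemma U'_lipschitz s t : 1 <= s <= t -> Rabs (U' mu t - U' mu s) <= 5/2 * (t - s).
Proof.
  intros Hst. apply Rabs_le. split.
  - enough (-(5/2) * (t - s) <= U' mu t - U' mu s) by lra.
    apply (increment_ge_of_derive_ge (U' mu) (fun x => - Q mu x * U mu x)); try lra.
    + intros x Hx; apply is_derive_U'; lra.
    + intros x Hx. pose proof (Rabs_U''_le x ltac:(lra)) as H. apply Rabs_le_between in H. lra.
  - apply (increment_le_of_derive_le (U' mu) (fun x => - Q mu x * U mu x)); try lra.
    + intros x Hx; apply is_derive_U'; lra.
    + intros x Hx. pose proof (Rabs_U''_le x ltac:(lra)) as H. apply Rabs_le_between in H. lra.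
Qed.

Lemma U'_near a x : 1 <= a -> 1 <= x -> Rabs (x - a) <= 1/10 -> Rabs (U' mu x - U' mu a) <= 1/4.
Proof.
  intros Ha Hx Hxa. destruct (Rle_or_lt a x) as [Hle|Hlt].
  - pose proof (U'_lipschitz a x ltac:(lra)). rewrite Rabs_right in Hxa by lra. lra.
  - pose proof (U'_lipschitz x a ltac:(lra)). rewrite Rabs_minus_sym.
    rewrite Rabs_left in Hxa by lra. lra.
Qed.

Lemma U_increment_ge a s t : 1 <= a -> 1 <= s -> a - 1/10 <= s <= t -> t <= a + 1/10 ->
  6/10 <= U' mu a -> 35/100 * (t - s) <= U mu t - U mu s.
Proof.
  intros Ha Hs Hst Hta HU'.
  apply (increment_ge_of_derive_ge (U mu) (U' mu)); try lra.
  - intros x Hx; apply is_derive_U; lra.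
  - intros x Hx. pose proof (U'_near a x Ha ltac:(lra) ltac:(apply Rabs_le; lra)) as H.
    apply Rabs_le_between in H. lra.
Qed.

Lemma U_increment_le a s t : 1 <= a -> 1 <= s -> a - 1/10 <= s <= t -> t <= a + 1/10 ->
  U' mu a <= -6/10 -> U mu t - U mu s <= -35/100 * (t - s).
Proof.
  intros Ha Hs Hst Hta HU'.
  apply (increment_le_of_derive_le (U mu) (U' mu)); try lra.
  - intros x Hx; apply is_derive_U; lra.
  - intros x Hx. pose proof (U'_near a x Ha ltac:(lra) ltac:(apply Rabs_le; lra)) as H.
    apply Rabs_le_between in H. lra.
Qed.

End SmallOrder.

Definition is_next_zero mu t z := t < z /\ U mu z = 0 /\ forall y, t < y < z -> U mu y <> 0.

(* Only meaningful when a next zero exists; otherwise an arbitrary real. *)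
Definition next_zero mu t := ClassicalEpsilon.epsilon (inhabits 0) (is_next_zero mu t).

(* [U_zero mu n] is the [(n+1)]-th positive zero: indexing starts at 0. *)
Fixpoint U_zero mu n := next_zero mu (match n with O => 0 | S k => U_zero mu k end).

Definition U_zero_prev mu n := match n with O => 0 | S k => U_zero mu k end.

Section Zeros.

Variable mu : R.
Hypothesis mu_small : -1/10 <= mu <= 1/10.

Lemma U_zero_gt_1 y : 0 < y -> U mu y = 0 -> 1 < y.
Proof. intros Hy E. destruct (Rlt_dec 1 y); auto. pose proof (U_pos mu mu_small y ltac:(lra)). lra. Qed.

Lemma U_sign_after_zero a h : 1 <= a -> U mu a = 0 -> 0 < h <= 1/10 -> 0 < U' mu a * U mu (a + h).
Proof.
  intros Ha H0 Hh. destruct (U'_at_zero_cases mu mu_small a Ha H0) as [H|H].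
  - pose proof (U_increment_ge mu mu_small a a (a + h) Ha Ha ltac:(lra) ltac:(lra) H). nra.
  - pose proof (U_increment_le mu mu_small a a (a + h) Ha Ha ltac:(lra) ltac:(lra) H). nra.
Qed.

Lemma U_sign_before_zero c h : 1 <= c - h -> U mu c = 0 -> 0 < h <= 1/10 -> U' mu c * U mu (c - h) < 0.
Proof.
  intros Hc H0 Hh. destruct (U'_at_zero_cases mu mu_small c ltac:(lra) H0) as [H|H].
  - pose proof (U_increment_ge mu mu_small c (c - h) c ltac:(lra) Hc ltac:(lra) ltac:(lra) H). nra.
  - pose proof (U_increment_le mu mu_small c (c - h) c ltac:(lra) Hc ltac:(lra) ltac:(lra) H). nra.
Qed.

Lemma U_zero_isolated a y : 1 <= a -> U mu a = 0 -> a < y <= a + 1/10 -> U mu y <> 0.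
Proof.
  intros Ha H0 Hy E. pose proof (U_sign_after_zero a (y - a) Ha H0 ltac:(lra)).
  replace (a + (y - a)) with y in H by ring. rewrite E in H. lra.
Qed.

Lemma ex_first_zero : exists z, is_next_zero mu 0 z.
Proof.
  destruct (U_sturm mu ltac:(lra) 1 ltac:(lra)) as [c Hc].
  destruct (first_zero_in_interval (U mu) 1 (1 + PI)) as [z [Hz1 [Hz2 Hz3]]]; eauto.
  - pose proof PI_RGT_0; lra.
  - intros t Ht; apply continuity_pt_U; lra.
  - exists z. split; [lra | split; auto]. intros y Hy.
    destruct (Rle_dec y 1); [pose proof (U_pos mu mu_small y ltac:(lra)); lra | apply Hz3; lra].
Qed.

Lemma ex_next_zero t : 1 <= t -> U mu t = 0 -> exists z, is_next_zero mu t z.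
Proof.
  intros Ht H0. destruct (U_sturm mu ltac:(lra) (t + 1/20) ltac:(lra)) as [c Hc].
  destruct (first_zero_in_interval (U mu) (t + 1/20) (t + 1/20 + PI)) as [z [Hz1 [Hz2 Hz3]]]; eauto.
  - pose proof PI_RGT_0; lra.
  - intros s Hs; apply continuity_pt_U; lra.
  - exists z. split; [lra | split; auto]. intros y Hy.
    destruct (Rle_dec y (t + 1/20)); [apply (U_zero_isolated t y); auto; lra | apply Hz3; lra].
Qed.

Lemma U_zero_spec n : is_next_zero mu (U_zero_prev mu n) (U_zero mu n) /\ 1 <= U_zero mu n.
Proof.
  assert (Hnext : forall t, (exists z, is_next_zero mu t z) -> is_next_zero mu t (next_zero mu t))
    by (intros t; apply ClassicalEpsilon.epsilon_spec).
  induction n as [|n [[Hlt [Hz _]] Hge]].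
  - pose proof (Hnext 0 ex_first_zero) as Hs. split; auto.
    destruct Hs as [Hs0 [Hs1 _]]. left; apply U_zero_gt_1; auto.
  - pose proof (Hnext _ (ex_next_zero _ Hge Hz)) as Hs. split; auto.
    destruct Hs as [Hs0 _]. change (U_zero mu n < U_zero mu (S n)) in Hs0. lra.
Qed.

Lemma U_zero_root n : U mu (U_zero mu n) = 0.
Proof. apply (U_zero_spec n). Qed.

Lemma U_zero_ge_1 n : 1 <= U_zero mu n.
Proof. apply (U_zero_spec n). Qed.

Lemma U_zero_prev_lt n : 0 <= U_zero_prev mu n < U_zero mu n.
Proof.
  destruct (U_zero_spec n) as [[Hlt _] _]. split; [|auto].
  destruct n; simpl; [lra | pose proof (U_zero_ge_1 n); lra].
Qed.

Lemma U_no_zero_before n y : U_zero_prev mu n < y < U_zero mu n -> U mu y <> 0.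
Proof. apply (U_zero_spec n). Qed.

Lemma U_zero_lt n : U_zero mu n < U_zero mu (S n).
Proof. apply (U_zero_prev_lt (S n)). Qed.

Lemma U_zero_increasing i j : (i < j)%nat -> U_zero mu i < U_zero mu j.
Proof.
  induction 1 as [|j Hij IH]; [apply U_zero_lt|]. pose proof (U_zero_lt j). lra.
Qed.

Lemma U_zero_complete n y : 0 < y < U_zero mu n -> U mu y = 0 -> exists k, (k < n)%nat /\ y = U_zero mu k.
Proof.
  induction n as [|n IH]; intros Hy E.
  - exfalso. apply (U_no_zero_before 0 y); auto.
  - destruct (Rtotal_order y (U_zero mu n)) as [H|[H|H]].
    + destruct (IH ltac:(lra) E) as [k [Hk1 Hk2]]. exists k; split; auto.
    + exists n; split; auto.
    + exfalso. apply (U_no_zero_before (S n) y); auto. unfold U_zero_prev; lra.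
Qed.

Lemma U'_at_first_zero : U' mu (U_zero mu 0) <= -6/10.
Proof.
  set (a := U_zero mu 0). assert (Ea : U mu a = 0) by apply U_zero_root.
  assert (Ha : 1 < a) by (apply U_zero_gt_1; auto; pose proof (U_zero_ge_1 0); unfold a; lra).
  destruct (U'_at_zero_cases mu mu_small a ltac:(lra) Ea) as [S|S]; auto. exfalso.
  set (h := Rmin (1/20) (a - 1)).
  assert (Hh : 0 < h <= 1/20 /\ h <= a - 1)
    by (unfold h; split; [split; [apply Rmin_glb_lt; lra | apply Rmin_l] | apply Rmin_r]).
  pose proof (U_sign_before_zero a h ltac:(lra) Ea ltac:(lra)).
  pose proof (U_pos mu mu_small 1 ltac:(lra)).
  assert (Hneg : U mu (a - h) < 0) by nra.
  assert (Hah : 1 < a - h).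
  { destruct (Req_dec (a - h) 1) as [E|]; [|lra]. rewrite E in Hneg. lra. }
  destruct (IVT_sign_change (U mu) 1 (a - h)) as [z [Hz Ez]]; [lra | | nra |].
  - intros t Ht; apply continuity_pt_U; lra.
  - apply (U_no_zero_before 0 z); auto. unfold U_zero_prev, a in *; lra.
Qed.

Lemma U'_at_consecutive_zeros a c : 1 <= a -> a < c -> U mu a = 0 -> U mu c = 0 ->
  (forall y, a < y < c -> U mu y <> 0) -> U' mu a * U' mu c < 0.
Proof.
  intros Ha Hac Ea Ec Hno.
  assert (Hgap : a + 1/10 < c).
  { destruct (Rlt_dec (a + 1/10) c); auto. exfalso. apply (U_zero_isolated a c Ha Ea); auto; lra. }
  pose proof (U_sign_after_zero a (1/20) Ha Ea ltac:(lra)).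
  pose proof (U_sign_before_zero c (1/20) ltac:(lra) Ec ltac:(lra)).
  destruct (Rlt_or_le (U' mu a * U' mu c) 0) as [|Hsame]; auto. exfalso.
  destruct (IVT_sign_change (U mu) (a + 1/20) (c - 1/20)) as [z [Hz Ez]]; [lra | | nra |].
  - intros t Ht; apply continuity_pt_U; lra.
  - apply (Hno z); auto; lra.
Qed.

End Zeros.

(** * Interlacing of the zeros of [U nu] and [U (- nu)] *)

Definition sonin_mixed nu x := U nu x * U (- nu) x + U' nu x * U' (- nu) x / Q nu x.

Section Interlacing.

Variable nu : R.
Hypothesis nu_small : 0 < nu <= 1/200.

Let nu_p : -1/10 <= nu <= 1/10.
Proof. lra. Qed.

Let nu_m : -1/10 <= - nu <= 1/10.
Proof. lra. Qed.

Lemma U_wronskian_small x : 0 < x -> U nu x * U' (- nu) x - U' nu x * U (- nu) x = -2 * nu.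
Proof. intros Hx. apply U_wronskian; auto; lra. Qed.

Lemma sonin_mixed_sq_pos x : 1 <= x -> 0 < sonin_mixed nu x * sonin_mixed nu x.
Proof.
  intros Hx. pose proof (sonin_ge nu nu_p x Hx). pose proof (sonin_ge (- nu) nu_m x Hx).
  pose proof (U_wronskian_small x ltac:(lra)) as HW. pose proof (Q_ge_1 nu ltac:(lra) x ltac:(lra)).
  assert (sonin nu x * sonin (- nu) x - sonin_mixed nu x * sonin_mixed nu x = (-2 * nu) * (-2 * nu) / Q nu x).
  { rewrite <- HW. unfold sonin, sonin_mixed. rewrite Q_opp. field. lra. }
  assert ((-2 * nu) * (-2 * nu) / Q nu x <= 4 * nu * nu).
  { unfold Rdiv. replace (4 * nu * nu) with ((-2 * nu) * (-2 * nu) * 1) by ring.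
    apply Rmult_le_compat_l; [nra|]. rewrite <- Rinv_1. apply Rinv_le_contravar; lra. }
  nra.
Qed.

Lemma sonin_mixed_1_pos : 0 < sonin_mixed nu 1.
Proof.
  unfold sonin_mixed. rewrite !U_at_1.
  pose proof (bessel_ser_bounds nu nu_p (1/4) ltac:(lra)).
  pose proof (bessel_ser_bounds (- nu) nu_m (1/4) ltac:(lra)).
  pose proof (Rabs_U'_1 nu nu_p). pose proof (Rabs_U'_1 (- nu) nu_m).
  pose proof (Q_ge_1 nu ltac:(lra) 1 ltac:(lra)).
  assert (Rabs (U' nu 1 * U' (- nu) 1 / Q nu 1) <= 42/100 * (42/100)).
  { unfold Rdiv. rewrite !Rabs_mult, Rabs_inv, (Rabs_right (Q nu 1)) by lra.
    assert (/ Q nu 1 <= 1) by (apply Rle_trans with (/ 1); [apply Rinv_le_contravar; lra | rewrite Rinv_1; lra]).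
    assert (0 < / Q nu 1) by (apply Rinv_0_lt_compat; lra).
    pose proof (Rabs_pos (U' nu 1)). pose proof (Rabs_pos (U' (- nu) 1)).
    apply Rle_trans with (42/100 * (42/100) * 1); [|lra].
    apply Rmult_le_compat; try lra; [apply Rmult_le_pos; auto | apply Rmult_le_compat; auto]. }
  apply Rabs_le_between in H4. nra.
Qed.

Lemma continuity_pt_sonin_mixed x : 1 <= x -> continuity_pt (sonin_mixed nu) x.
Proof.
  intros Hx. pose proof (Q_ge_1 nu ltac:(lra) x ltac:(lra)). unfold sonin_mixed.
  apply continuity_pt_plus; [apply continuity_pt_mult; apply continuity_pt_U; lra|].
  apply continuity_pt_div; [apply continuity_pt_mult; apply continuity_pt_U'; lra | | lra].
  apply (is_derive_continuity_pt _ _ _ (is_derive_Q nu x ltac:(lra))).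
Qed.

Lemma sonin_mixed_pos x : 1 <= x -> 0 < sonin_mixed nu x.
Proof.
  intros Hx. pose proof (sonin_mixed_sq_pos x Hx). pose proof sonin_mixed_1_pos.
  destruct (Rlt_or_le 0 (sonin_mixed nu x)) as [|Hneg]; auto. exfalso.
  destruct (IVT_sign_change (sonin_mixed nu) 1 x Hx) as [z [Hz Ez]]; [| nra |].
  - intros t Ht; apply continuity_pt_sonin_mixed; lra.
  - pose proof (sonin_mixed_sq_pos z ltac:(lra)). rewrite Ez in H1. lra.
Qed.

Lemma U_opp_at_zero a : 0 < a -> U nu a = 0 -> U (- nu) a * U' nu a = 2 * nu.
Proof. intros Ha E. pose proof (U_wronskian_small a Ha). rewrite E in H. lra. Qed.

Lemma U_at_opp_zero b : 0 < b -> U (- nu) b = 0 -> U nu b * U' (- nu) b = -2 * nu.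
Proof. intros Hb E. pose proof (U_wronskian_small b Hb). rewrite E in H. lra. Qed.

Lemma U_zero_after_opp_zero b : 1 <= b -> U (- nu) b = 0 ->
  exists z, b < z < b + 20 * nu /\ U nu z = 0.
Proof.
  intros Hb E.
  pose proof (U_at_opp_zero b ltac:(lra) E) as HW.
  pose proof (U'_sq_at_zero (- nu) nu_m b Hb E) as Hw1.
  pose proof (sonin_ge nu nu_p b Hb) as HD. unfold sonin in HD.
  pose proof (Q_ge_1 nu ltac:(lra) b ltac:(lra)) as HQ.
  pose proof (sonin_mixed_pos b Hb) as HP.
  unfold sonin_mixed in HP. rewrite E, Rmult_0_r, Rplus_0_l in HP.
  set (v := U nu b) in *. set (v1 := U' nu b) in *. set (w1 := U' (- nu) b) in *.
  assert (Hv : v * v <= 9 * nu * nu).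
  { assert (v * v * (w1 * w1) = 4 * nu * nu) by (replace (v * v * (w1 * w1)) with ((v * w1) * (v * w1)) by ring; rewrite HW; ring).
    nra. }
  assert (Hv1 : 36/100 < v1 * v1).
  { assert (v1 * v1 / Q nu b <= v1 * v1).
    { unfold Rdiv. pose proof (Rle_0_sqr v1). unfold Rsqr in *.
      rewrite <- (Rmult_1_r (v1 * v1)) at 2. apply Rmult_le_compat_l; auto.
      apply Rle_trans with (/ 1); [apply Rinv_le_contravar; lra | rewrite Rinv_1; lra]. }
    nra. }
  assert (Hvw : 0 < v1 * w1).
  { assert (0 < / Q nu b) by (apply Rinv_0_lt_compat; lra). unfold Rdiv in HP. nra. }
  assert (Hcont : forall t, b <= t <= b + 20 * nu -> continuity_pt (U nu) t)
    by (intros t Ht; apply continuity_pt_U; lra).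
  destruct (Rle_or_lt (6/10) v1) as [Sv|Sv].
  - pose proof (U_increment_ge nu nu_p b b (b + 20 * nu) Hb Hb ltac:(lra) ltac:(lra) Sv) as Hinc. fold v in Hinc.
    assert (v < 0) by nra.
    destruct (IVT_sign_change (U nu) b (b + 20 * nu)) as [z [Hz Ez]]; [lra | exact Hcont | | exists z; auto].
    fold v. assert (- (3 * nu) <= v) by nra. assert (0 < U nu (b + 20 * nu)) by lra. nra.
  - assert (Sv' : v1 <= -6/10) by nra.
    pose proof (U_increment_le nu nu_p b b (b + 20 * nu) Hb Hb ltac:(lra) ltac:(lra) Sv') as Hinc. fold v in Hinc.
    assert (0 < v) by nra.
    destruct (IVT_sign_change (U nu) b (b + 20 * nu)) as [z [Hz Ez]]; [lra | exact Hcont | | exists z; auto].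
    fold v. assert (v <= 3 * nu) by nra. assert (U nu (b + 20 * nu) < 0) by lra. nra.
Qed.

Lemma U_opp_nonzero_at_zero a : 0 < a -> U nu a = 0 -> U (- nu) a <> 0.
Proof. intros Ha E E'. pose proof (U_opp_at_zero a Ha E). rewrite E' in H. lra. Qed.

Lemma ex_opp_zero_before_zero n :
  exists c, U_zero_prev nu n < c < U_zero nu n /\ U (- nu) c = 0.
Proof.
  destruct n as [|k].
  - set (a := U_zero nu 0).
    assert (Ea : U nu a = 0) by apply (U_zero_root nu nu_p).
    assert (Ha : 1 < a) by (apply (U_zero_gt_1 nu nu_p); auto; pose proof (U_zero_ge_1 nu nu_p 0); unfold a; lra).
    pose proof (U'_at_first_zero nu nu_p) as Hs. fold a in Hs.
    pose proof (U_opp_at_zero a ltac:(lra) Ea) as HW.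
    pose proof (U_pos (- nu) nu_m 1 ltac:(lra)).
    assert (U (- nu) a < 0) by nra.
    destruct (IVT_sign_change (U (- nu)) 1 a) as [z [Hz Ez]]; [lra | | nra |].
    + intros t Ht; apply continuity_pt_U; lra.
    + exists z. unfold U_zero_prev. split; [lra | auto].
  - unfold U_zero_prev. set (a := U_zero nu k). set (c := U_zero nu (S k)).
    assert (Ha : 1 <= a) by apply (U_zero_ge_1 nu nu_p).
    assert (Hac : a < c) by apply (U_zero_lt nu nu_p).
    assert (Ea : U nu a = 0) by apply (U_zero_root nu nu_p).
    assert (Ec : U nu c = 0) by apply (U_zero_root nu nu_p).
    pose proof (U'_at_consecutive_zeros nu nu_p a c Ha Hac Ea Ec (U_no_zero_before nu nu_p (S k))) as Halt.
    pose proof (U_opp_at_zero a ltac:(lra) Ea) as HWa.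
    pose proof (U_opp_at_zero c ltac:(lra) Ec) as HWc.
    assert (U (- nu) a * U (- nu) c < 0).
    { assert (0 < (U (- nu) a * U' nu a) * (U (- nu) c * U' nu c)) by (rewrite HWa, HWc; nra).
      nra. }
    destruct (IVT_sign_change (U (- nu)) a c) as [z [Hz Ez]]; [lra | | auto | exists z; auto].
    intros t Ht; apply continuity_pt_U; lra.
Qed.

Lemma U_zero_lt_after_opp_zero n b : U_zero_prev nu n < b -> 1 <= b -> U (- nu) b = 0 ->
  U_zero nu n < b + 20 * nu.
Proof.
  intros Hb Hb1 E. destruct (U_zero_after_opp_zero b Hb1 E) as [z [Hz Ez]].
  destruct (Rlt_or_le (U_zero nu n) z) as [|Hle]; [lra|].
  destruct (Req_dec z (U_zero nu n)) as [->|Hne]; [lra|].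
  exfalso. apply (U_no_zero_before nu nu_p n z); auto. lra.
Qed.

Lemma opp_zeros_separated n c1 c2 : U_zero_prev nu n < c1 < c2 -> c2 < U_zero nu n ->
  U (- nu) c1 = 0 -> U (- nu) c2 = 0 -> False.
Proof.
  intros Hc Hc2 E1 E2. pose proof (U_zero_prev_lt nu nu_p n).
  assert (Hc1 : 1 < c1) by (apply (U_zero_gt_1 (- nu) nu_m); auto; lra).
  pose proof (U_zero_lt_after_opp_zero n c1 ltac:(lra) ltac:(lra) E1).
  apply (U_zero_isolated (- nu) nu_m c1 c2); auto; lra.
Qed.

Lemma U_zeros_interlace n : U_zero_prev nu n < U_zero (- nu) n < U_zero nu n.
Proof.
  induction n as [|n IH].
  - destruct (ex_opp_zero_before_zero 0) as [c [Hc Ec]].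
    pose proof (U_zero_ge_1 (- nu) nu_m 0). unfold U_zero_prev in *.
    split; [lra|].
    destruct (Rlt_or_le (U_zero (- nu) 0) c) as [|Hle]; [lra|].
    destruct (Req_dec c (U_zero (- nu) 0)) as [<-|Hne]; [lra|].
    exfalso. apply (U_no_zero_before (- nu) nu_m 0 c); auto. unfold U_zero_prev; lra.
  - destruct (ex_opp_zero_before_zero (S n)) as [c [Hc Ec]].
    change (U_zero_prev nu (S n)) with (U_zero nu n) in *.
    assert (Hle : U_zero (- nu) (S n) <= c).
    { destruct (Rle_or_lt (U_zero (- nu) (S n)) c) as [|Hlt]; auto. exfalso.
      apply (U_no_zero_before (- nu) nu_m (S n) c); auto.
      change (U_zero_prev (- nu) (S n)) with (U_zero (- nu) n). lra. }
    split; [|lra].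
    pose proof (U_zero_lt (- nu) nu_m n). pose proof (U_zero_ge_1 nu nu_p n).
    destruct (Rtotal_order (U_zero nu n) (U_zero (- nu) (S n))) as [L|[L|L]]; auto; exfalso.
    + apply (U_opp_nonzero_at_zero (U_zero nu n)); [lra | apply (U_zero_root nu nu_p) |].
      rewrite L. apply (U_zero_root (- nu) nu_m).
    + apply (opp_zeros_separated n (U_zero (- nu) n) (U_zero (- nu) (S n))); try lra;
        apply (U_zero_root (- nu) nu_m).
Qed.

Lemma U_zero_gap_lt n : U_zero nu n - U_zero (- nu) n < 20 * nu.
Proof.
  pose proof (U_zeros_interlace n). pose proof (U_zero_ge_1 (- nu) nu_m n).
  pose proof (U_zero_lt_after_opp_zero n (U_zero (- nu) n) ltac:(lra) ltac:(lra) (U_zero_root (- nu) nu_m n)).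
  lra.
Qed.

Lemma U_zero_gap_ge n : nu / 2 <= U_zero nu n - U_zero (- nu) n.
Proof.
  pose proof (U_zeros_interlace n). pose proof (U_zero_ge_1 (- nu) nu_m n).
  set (a := U_zero nu n) in *. set (b := U_zero (- nu) n) in *.
  assert (Ea : U nu a = 0) by apply (U_zero_root nu nu_p).
  assert (Eb : U (- nu) b = 0) by apply (U_zero_root (- nu) nu_m).
  pose proof (U_opp_at_zero a ltac:(lra) Ea) as HW.
  destruct (U_bounds nu nu_p a ltac:(lra)) as [_ Hv1].
  assert (Hwa : nu <= Rabs (U (- nu) a)).
  { apply Rmult_le_reg_r with (Rabs (U' nu a)).
    { apply Rabs_pos_lt. intro E. rewrite E in HW. lra. }
    rewrite <- Rabs_mult, HW, (Rabs_right (2 * nu)) by lra.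
    pose proof (Rabs_pos (U' nu a)). nra. }
  destruct (MVT_interval (U (- nu)) (U' (- nu)) b a ltac:(lra)) as [c [Hc E]].
  { intros t Ht. apply is_derive_U; lra. }
  rewrite Eb, Rminus_0_r in E.
  destruct (U_bounds (- nu) nu_m c ltac:(lra)) as [_ Hw1].
  rewrite E, Rabs_mult, (Rabs_right (a - b)) in Hwa by lra.
  nra.
Qed.

End Interlacing.

Lemma BesselJ_eq_0_iff mu x : -1 < mu <= 1 -> 0 < x -> BesselJ mu x = 0 <-> U mu x = 0.
Proof.
  intros Hmu Hx. rewrite BesselJ_bessel_ser by auto. unfold U.
  pose proof (Gamma_bessel_pos mu 0 Hmu) as HG. rewrite Rplus_0_l in HG.
  assert (0 < Rpower (x / 2) mu / Gamma (mu + 1)) by (apply Rdiv_lt_0_compat; [apply Rpower_pos | auto]).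
  pose proof (Rpower_pos x (mu + 1/2)).
  split; intro E; apply Rmult_integral in E; destruct E as [E|E]; try lra; rewrite E; ring.
Qed.

Lemma U_zero_nth_pos_zero mu n : -1/10 <= mu <= 1/10 -> (1 <= n)%nat ->
  is_nth_pos_zero mu n (U_zero mu (n - 1)).
Proof.
  intros Hmu Hn. pose proof (U_zero_ge_1 mu Hmu (n - 1)).
  split; [lra|]. split; [apply BesselJ_eq_0_iff; [lra | lra | apply U_zero_root; auto]|].
  exists (map (U_zero mu) (seq 0 (n - 1))). split; [|split].
  - apply NoDup_map_NoDup_ForallPairs; [|apply seq_NoDup].
    intros i j _ _ E. destruct (Nat.lt_total i j) as [L|[L|L]]; auto;
      pose proof (U_zero_increasing mu Hmu _ _ L); lra.
  - rewrite length_map, length_seq. auto.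
  - intros x. rewrite in_map_iff. split.
    + intros [k [<- Hk]]. apply in_seq in Hk.
      pose proof (U_zero_ge_1 mu Hmu k). pose proof (U_zero_increasing mu Hmu k (n - 1) ltac:(lia)).
      split; [lra|]. apply BesselJ_eq_0_iff; [lra | lra | apply U_zero_root; auto].
    + intros [Hx E]. apply BesselJ_eq_0_iff in E; [|lra|lra].
      destruct (U_zero_complete mu Hmu (n - 1) x Hx E) as [k [Hk Ek]].
      exists k. split; auto. apply in_seq. lia.
Qed.

Lemma nu_alpha_bounds alpha : 0 < alpha < 1 -> (1 - alpha) / 2 <= nu_alpha alpha <= 1 - alpha.
Proof.
  intros Ha. unfold nu_alpha. split.
  - apply Rmult_le_reg_r with (2 - alpha); [lra|]. field_simplify; nra.
  - apply Rmult_le_reg_r with (2 - alpha); [lra|]. field_simplify; nra.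
Qed.

Theorem lemma7p4 :
  exists (m M alpha0 : R),
    0 < m /\ m <= M /\ 0 < alpha0 < 1 /\
    forall (alpha : R) (n : nat),
      alpha0 <= alpha < 1 -> (1 <= n)%nat ->
      exists jp jm : R,
        is_nth_pos_zero (nu_alpha alpha) n jp /\
        is_nth_pos_zero (- nu_alpha alpha) n jm /\
        m * (1 - alpha) <= jp - jm <= M * (1 - alpha).
Proof.
  exists (1/4), 20, (199/200). split; [lra|]. split; [lra|]. split; [lra|].
  intros alpha n Ha Hn.
  set (nu := nu_alpha alpha).
  assert (Hnu : (1 - alpha) / 2 <= nu <= 1 - alpha) by (apply nu_alpha_bounds; lra).
  assert (Hsmall : 0 < nu <= 1/200) by lra.
  exists (U_zero nu (n - 1)), (U_zero (- nu) (n - 1)).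
  split; [apply U_zero_nth_pos_zero; auto; lra|].
  split; [apply U_zero_nth_pos_zero; auto; lra|].
  pose proof (U_zero_gap_lt nu Hsmall (n - 1)). pose proof (U_zero_gap_ge nu Hsmall (n - 1)).
  lra.
Qed.
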